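(* Let $P\in\mathfrak N^{LS}_2$ with $h_P\ge2$ and let $r:P\to R$ be a retraction such that $R(0)$ is a 2-element antichain. (1) $R(0)\subseteq P(0)\cup P(1)$ and $R(0)\cap P(0)\neq\emptyset$; moreover, if $R(0)\cap P(1)\neq\emptyset$, then $h_R\ge1$ and $R(1\to h_R)$ is a retract of $P(2\to h_P)$. (2) There is a retraction $s:P\to S$ with $S\cong R$, $S(0)\subseteq P(0)$, $s[P(0)]=S(0)$, and $s^{-1}(p)=\{p\}$ for some $p\in S(0)$.
   Context: All posets are finite; $h_P$ is the height; level sets $P(0)=\min P$, $P(k+1)=\min(P\setminus\bigcup_{i\le k}P(i))$; $P(k\to\ell)=\bigcup_{i=k}^\ell P(i)$ as induced subposet. Level sets $R(\ell)$ and $R(k\to\ell)$ of a retract $R$ refer to $R$'s own levels. $A<B$ means $a<b$ for all $a\in A,b\in B$. A retraction $r:P\to R$ is an idempotent order-preserving self-map with image $R$. A section of width three is a poset $P$ of height $h_P\ge1$ with carrier $\{c_{k,j}:k\in[0,h_P],j\in\{0,1,2\}\}$ such that: $c_{0,j}<\dots<c_{h_P,j}$ for each $j$; each $\{c_{k,0},c_{k,1},c_{k,2}\}$ is an antichain; $c_{k,i}<c_{\ell,j}\Rightarrow c_{k,i+1}<c_{\ell,j+1}$ (indices mod 3); and for no $k$ is $P(k)<P(k+1)$. It is nice if for all $x<y$: $\{z:z>x\}\not\subseteq\{z:z\ge y\}$ and $\{z:z<y\}\not\subseteq\{z:z\le x\}$. $\mathfrak N_2$ is the class of nice sections of width three of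 height $\ge2$ with horizon 2 (i.e. $P(k)<P(\ell)$ whenever $\ell\ge k+2$). $\mathfrak N^{LS}_2=\{P(0\to h_P-1):P\in\mathfrak N_2\}$ (lower segments). Each consecutive level pair $P(k)\cup P(k+1)$ of such posets is a 6-crown ($x_0<y_0>x_1<y_1>x_2<y_2>x_0$, no other comparabilities) or of type $3C$ (three disjoint 2-chains), and $P(0)\cup P(1)$ is a 6-crown for $P\in\mathfrak N^{LS}_2$ with $h_P\ge1$. *)

(* Posets are finite partial orders: a finPOrderType T.
   Subposets are subsets A : {set T} carrying the induced order. *)
From mathcomp Require Import all_boot all_order.
Set Implicit Arguments. Unset Strict Implicit. Unset Printing Implicit Defensive.
Import Order.TTheory.
Local Open Scope order_scope.

Section Defs.
Context {d : Order.disp_t} {T : finPOrderType d}.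
Implicit Types (A B : {set T}).

Definition minimals A : {set T} := [set x in A | [forall y in A, ~~ (y < x)]].

Fixpoint rest A (k : nat) : {set T} :=
  match k with
  | 0 => A
  | k'.+1 => rest A k' :\: minimals (rest A k')
  end.

(* level sets: A(0) = min A, A(k+1) = min (A \ U_{i<=k} A(i)) *)
Definition level A (k : nat) : {set T} := minimals (rest A k).

(* height: the largest index of a nonempty level (0 for the empty poset) *)
Definition height A : nat := (\max_(k < #|A|.+1 | level A k != set0) k)%N.

(* A(k -> l) = union of the levels k..l of A *)
Definition segment A (k l : nat) : {set T} :=
  \bigcup_(k <= i < l.+1) level A i.

Definition set_lt A B : Prop := forall a b, a \in A -> b \in B -> a < b.

Definition antichain A : Prop :=
  forall x y, x \in A -> y \in A -> x != y -> ~~ (x >=< y).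

Definition retraction_on A (r : T -> T) : Prop :=
  [/\ {in A, forall x, r x \in A},
      {in A &, forall x y, x <= y -> r x <= r y} &
      {in A, forall x, r (r x) = r x}].

Definition is_retract A B : Prop :=
  exists r : T -> T, retraction_on A r /\ B = r @: A.

Definition iso_sub A B : Prop :=
  exists f : T -> T,
    [/\ {in A &, injective f}, f @: A = B &
        {in A &, forall x y, (f x <= f y) = (x <= y)}].

(* The whole type T is a section of width three, with carrier
   c : 'I_(h+1) -> 'I_3 -> T (c k j = c_{k,j}) *)
Definition section3 (h : nat) (c : 'I_h.+1 -> 'I_3 -> T) : Prop :=
  [/\ (1 <= h)%N, height [set: T] = h,
      (forall t : T, exists k j, c k j = t) &
      (forall k j k' j', c k j = c k' j' -> k = k' /\ j = j')] /\
  [/\ (forall (k l : 'I_h.+1) (j : 'I_3), (k < l)%N -> c k j < c l j),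
      (forall (k : 'I_h.+1) (i j : 'I_3), i != j -> ~~ (c k i >=< c k j)),
      (forall (k l : 'I_h.+1) (i j : 'I_3),
          c k i < c l j -> c k (ordS i) < c l (ordS j)) &
      (forall k : nat, (k < h)%N ->
          ~ set_lt (level [set: T] k) (level [set: T] k.+1))].

Definition nice_whole : Prop :=
  forall x y : T, x < y ->
    (exists z, x < z /\ ~~ (y <= z)) /\ (exists z, z < y /\ ~~ (z <= x)).

Definition horizon2_whole : Prop :=
  forall k l : nat, (k.+2 <= l)%N -> set_lt (level [set: T] k) (level [set: T] l).

Definition in_N2 : Prop :=
  exists h (c : 'I_h.+1 -> 'I_3 -> T),
    [/\ section3 c, (2 <= h)%N, nice_whole & horizon2_whole].

Definition lower_segment : {set T} :=
  segment [set: T] 0 (height [set: T]).-1.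

End Defs.

(* The retraction r sends every point of P lying below a minimal point y of
   R = r(P) to y itself, so the two minimal points a, b of R have no common
   lower bound in P. Horizon 2 puts all of P(0) below P(2 -> h), and any two
   points of P(1) share a lower bound in P(0) (P(0) u P(1) is a 6-crown);
   hence one of a, b lies in P(0) and the other in P(0) u P(1).
   If b lies in P(1), then r maps P(2 -> h) into R \ {a, b} = R(1 -> h_R), and
   composing r with the map replacing b by a point m of P(0) below b yields S.
   If a, b both lie in P(0), the third minimal point c of P is sent to
   whichever of a, b lies below r c instead. In both cases the remaining
   minimal point of S has a singleton fibre, since every point outside P(0)
   lies above two distinct points of P(0). *)

From mathcomp Require Import all_boot all_order.
Set Implicit Arguments. Unset Strict Implicit. Unset Printing Implicit Defensive.
Import Order.TTheory.
Local Open Scope order_scope.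

Section Levels.
Context {d : Order.disp_t} {T : finPOrderType d}.
Implicit Types (A B : {set T}) (x y : T).

Lemma minimalsP A x :
  reflect (x \in A /\ forall y, y \in A -> ~~ (y < x)) (x \in minimals A).
Proof. by rewrite inE; apply: (iffP andP) => -[xA /forall_inP]. Qed.

Lemma minimals_sub A : minimals A \subset A.
Proof. by apply/subsetP => x /minimalsP[]. Qed.

Lemma minimals_le_eq A x y : x \in minimals A -> y \in A -> y <= x -> y = x.
Proof.
move=> /minimalsP[_ xmin] yA; rewrite le_eqVlt => /predU1P[//|yx].
by have := xmin y yA; rewrite yx.
Qed.

Lemma minimals_subset A B x : B \subset A -> x \in B -> x \in minimals A ->
  x \in minimals B.
Proof.
move=> BA xB /minimalsP[_ xmin]; apply/minimalsP; split=> // y yB.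
exact: xmin (subsetP BA y yB).
Qed.

Lemma minimals_below A x : x \in A -> exists2 m, m \in minimals A & m <= x.
Proof.
move=> xA; pose below_x y := (y \in A) && (y <= x).
have xB : below_x x by rewrite /below_x xA lexx.
case: (arg_minnP (fun y => #|[set z in A | z < y]|) xB) => m /andP[mA mx] mmin.
exists m => //; apply/minimalsP; split=> // y yA; apply/negP => ym.
have := mmin y; rewrite /below_x yA (le_trans (ltW ym) mx) => /(_ isT).
apply/negP; rewrite -ltnNge; apply: proper_card; apply/properP; split.
  by apply/subsetP => z; rewrite !inE => /andP[-> /lt_trans]; apply.
by exists y; rewrite !inE ?yA ?ym ?ltxx.
Qed.

Lemma minimals_imset A (f : T -> T) :
  {in A &, forall x y, (f x <= f y) = (x <= y)} ->
  minimals (f @: A) = f @: minimals A.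
Proof.
move=> fle; have flt : {in A &, forall x y, (f x < f y) = (x < y)}.
  by move=> x y xA yA; rewrite !lt_leAnge !fle.
apply/setP => y; apply/idP/imsetP => [/minimalsP[/imsetP[x xA ->] ymin]|].
  exists x => //; apply/minimalsP; split=> // z zA.
  by rewrite -flt // ymin // imset_f.
case=> x /minimalsP[xA xmin] ->; apply/minimalsP; split; first exact: imset_f.
by move=> _ /imsetP[z zA ->]; rewrite flt // xmin.
Qed.

Lemma rest_sub A k : rest A k \subset A.
Proof.
by elim: k => [|k IH] /=; [exact: subxx | exact: subset_trans (subsetDl _ _) IH].
Qed.

Lemma rest_decr A i j : (i <= j)%N -> rest A j \subset rest A i.
Proof.
move=> /subnK <-; elim: (j - i)%N => [|n IH] /=; first exact: subxx.
exact: subset_trans (subsetDl _ _) IH.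
Qed.

Lemma level_rest A k : level A k \subset rest A k.
Proof. exact: minimals_sub. Qed.

Lemma in_level A k x : x \in level A k -> x \in A.
Proof. by move/(subsetP (level_rest A k))/(subsetP (rest_sub A k)). Qed.

Lemma level_ltn A i j x y :
  x \in level A i -> y \in level A j -> y < x -> (j < i)%N.
Proof.
move=> xi yj yx; rewrite ltnNge; apply/negP => ij.
have yr := subsetP (rest_decr A ij) y (subsetP (level_rest A j) y yj).
by have [_ /(_ y yr)] := minimalsP _ _ xi; rewrite yx.
Qed.

Lemma level_uniq A i j x : x \in level A i -> x \in level A j -> i = j.
Proof.
wlog ij : i j / (i <= j)%N => [wlog xi xj|xi xj].
  by case: (leqP i j) => [|/ltnW] ji; [exact: wlog | exact/esym/wlog].
case: (ltngtP i j) ij => // ij _.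
have := subsetP (rest_decr A ij) x (subsetP (level_rest A j) x xj).
by rewrite /= inE xi.
Qed.

Lemma card_rest A k : (#|rest A k| <= #|A| - k)%N.
Proof.
elim: k => [|k IH] /=; first by rewrite subn0.
case: (set_0Vmem (rest A k)) => [->|[x xr]]; first by rewrite set0D cards0.
have [m mr _] := minimals_below xr.
have lt : (#|rest A k :\: minimals (rest A k)| < #|rest A k|)%N.
  apply: proper_card; apply/properP; split; first exact: subsetDl.
  by exists m; [exact: subsetP (minimals_sub _) _ mr | rewrite inE mr].
by rewrite subnS -ltnS (leq_trans lt) // (leq_trans IH) // leqSpred.
Qed.

Lemma level_cover A x : x \in A -> exists2 k, (k < #|A|)%N & x \in level A k.
Proof.
move=> xA.
have step k : x \in rest A k \/ exists2 i, (i < k)%N & x \in level A i.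
  elim: k => [|k [xr|[i ik xi]]]; [by left | | by right; exists i => //; exact: ltnW].
  case: (boolP (x \in level A k)) => xk; first by right; exists k.
  by left; rewrite /= inE xr xk.
case: (step #|A|) => // xr.
by have := card_rest A #|A|; rewrite subnn leqn0 cards_eq0 => /eqP E; rewrite E inE in xr.
Qed.

Lemma level_leq_height A k x : x \in level A k -> (k <= height A)%N.
Proof.
move=> xk; have [k' k'A xk'] := level_cover (in_level xk).
rewrite -(level_uniq xk xk') in k'A.
have kA : (k < #|A|.+1)%N by exact: ltnW.
apply: (@leq_bigmax_cond _ (fun i : 'I_#|A|.+1 => level A i != set0) _ (Ordinal kA)).
by apply/set0Pn; exists x.
Qed.

Lemma level_height A : (0 < height A)%N -> exists x, x \in level A (height A).
Proof.
rewrite /height; case: (pickP (fun i : 'I_#|A|.+1 => level A i != set0)) => [i0 i0A|].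
  rewrite (bigop.bigmax_eq_arg i0) //; case: arg_maxnP => //= i /set0Pn[x xi] _ _.
  by exists x.
by move=> none; rewrite big_pred0.
Qed.

Lemma height_gt0 A x : x \in A -> x \notin level A 0 -> (0 < height A)%N.
Proof.
move=> xA x0; have [[|k] _ xk] := level_cover xA; first by rewrite xk in x0.
exact: leq_trans (ltn0Sn k) (level_leq_height xk).
Qed.

Lemma mem_segment A i j x :
  reflect (exists k, [/\ (i <= k)%N, (k <= j)%N & x \in level A k])
          (x \in segment A i j).
Proof.
rewrite /segment (big_morph (fun B => x \in B) (in_setU x) (in_set0 x)) big_has.
apply: (iffP hasP) => [[k]|[k [ik kj xk]]].
  by rewrite mem_index_iota => /andP[ik kj] xk; exists k.
by exists k => //; rewrite mem_index_iota ik ltnS.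
Qed.

Lemma mem_segment_height A k x :
  reflect (exists2 i, (k <= i)%N & x \in level A i) (x \in segment A k (height A)).
Proof.
apply: (iffP (mem_segment _ _ _ _)) => [[i [ki _ xi]]|[i ki xi]]; first by exists i.
by exists i; split=> //; exact: level_leq_height xi.
Qed.

Lemma segment1_height A : segment A 1 (height A) = A :\: level A 0.
Proof.
apply/setP => x; rewrite inE; apply/mem_segment_height/andP => [[i ki xi]|[x0 xA]].
  by split; [apply/negP => /(level_uniq xi) i0; rewrite i0 in ki | exact: in_level xi].
have [[|i] _ xi] := level_cover xA; [by rewrite xi in x0 | by exists i.+1].
Qed.

Lemma segment2_height A :
  segment A 2 (height A) = A :\: (level A 0 :|: level A 1).
Proof.
apply/setP => x; rewrite in_setD in_setU.
apply/mem_segment_height/andP => [[i ki xi]|[x01 xA]].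
  split; last exact: in_level xi.
  by apply/negP => /orP[] /(level_uniq xi) ij; rewrite ij in ki.
have [[|[|i]] _ xi] := level_cover xA; rewrite ?xi ?orbT // in x01.
by exists i.+2.
Qed.

Section Downset.
Variables A B : {set T}.
Hypotheses (AB : A \subset B) (downA : {in A & B, forall x y, y < x -> y \in A}).

Lemma minimals_downset (X : {set T}) x : X \subset B ->
  (x \in minimals (A :&: X)) = (x \in A) && (x \in minimals X).
Proof.
move=> XB; case: (boolP (x \in A)) => /= xA; last first.
  by apply/negP => /minimalsP[]; rewrite inE (negbTE xA).
apply/minimalsP/minimalsP => [[/setIP[_ xX] xmin]|[xX xmin]]; split.
- by [].
- move=> y yX; apply/negP => yx.
  by have := xmin y; rewrite inE (downA xA (subsetP XB y yX) yx) yX yx => /(_ isT).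
- by rewrite inE xA.
- by move=> y /setIP[_ /xmin].
Qed.

Lemma rest_downset k : rest A k = A :&: rest B k.
Proof.
elim: k => [|k IH] /=; first by apply/esym/setIidPl.
apply/setP => x; rewrite IH in_setD in_setI (minimals_downset x (rest_sub B k)).
by rewrite in_setI in_setD; case: (x \in A).
Qed.

Lemma level_downset k : level A k = A :&: level B k.
Proof.
apply/setP => x.
by rewrite /level rest_downset in_setI (minimals_downset x (rest_sub B k)).
Qed.

End Downset.
End Levels.

Section Card3.
Variable T : finType.
Implicit Types (A : {set T}) (x y z : T).

Lemma set3_card A x y z : #|A| = 3 -> x \in A -> y \in A -> z \in A ->
  x != y -> x != z -> y != z -> A = [set x; y; z].
Proof.
move=> A3 xA yA zA xy xz yz; apply/esym/eqP; rewrite eqEcard A3.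
apply/andP; split; first by apply/subsetP => t; rewrite !inE -orbA => /or3P[] /eqP->.
by rewrite -setUA !cardsU1 cards1 !inE negb_or xy xz yz.
Qed.

Lemma card3_third A x y : #|A| = 3 -> x != y -> exists2 z, z \in A & z \notin [set x; y].
Proof.
move=> A3 xy; case: (set_0Vmem (A :\: [set x; y])) => [AD0|[z]]; last first.
  by rewrite inE => /andP[zn zA]; exists z.
have : A \subset [set x; y] by rewrite -setD_eq0 AD0.
by move/subset_leq_card; rewrite A3 cards2 xy.
Qed.

End Card3.

Lemma iso_sub_refl {d : Order.disp_t} {T : finPOrderType d} (A : {set T}) :
  iso_sub A A.
Proof. by exists id; split=> //; rewrite imset_id. Qed.

Definition normalized_retract {d : Order.disp_t} {T : finPOrderType d}
    (P R : {set T}) : Prop :=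
  exists s : T -> T,
  let S := s @: P in
  [/\ retraction_on P s, iso_sub S R,
      level S 0 \subset level P 0,
      s @: level P 0 = level S 0 &
      exists2 p, p \in level S 0 & [set x in P | s x == p] = [set p]].

Section Retractions.
Context {d : Order.disp_t} {T : finPOrderType d}.
Variables (P : {set T}) (r : T -> T).
Hypothesis retr : retraction_on P r.
Local Notation R := (r @: P).

Lemma retraction_mem x : x \in P -> r x \in P.
Proof. by case: retr => rP _ _; exact: rP. Qed.

Lemma retraction_homo x y : x \in P -> y \in P -> x <= y -> r x <= r y.
Proof. by case: retr => _ rle _; exact: rle. Qed.

Lemma retraction_image_sub y : y \in R -> y \in P.
Proof. by case/imsetP => x xP ->; exact: retraction_mem. Qed.

Lemma retraction_fix y : y \in R -> r y = y.
Proof. by case: retr => _ _ ridem /imsetP[x xP ->]; exact: ridem. Qed.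

Lemma retraction_below_minimal x y :
  x \in P -> y \in minimals R -> x <= y -> r x = y.
Proof.
move=> xP ymin xy; have yR := subsetP (minimals_sub _) y ymin.
apply: minimals_le_eq ymin (imset_f _ xP) _.
by rewrite -(retraction_fix yR) retraction_homo ?(retraction_image_sub yR).
Qed.

Lemma retraction_restrict (Q : {set T}) :
  Q \subset P -> {in Q, forall x, r x \in Q} ->
  retraction_on Q r /\ r @: Q = R :&: Q.
Proof.
move=> QP rQ; have QP' := subsetP QP; split.
  case: retr => _ rle ridem.
  split=> [//|x y xQ yQ|x xQ]; first exact: rle (QP' x xQ) (QP' y yQ).
  exact: ridem (QP' x xQ).
apply/setP => y; rewrite in_setI; apply/imsetP/andP => [[x xQ ->]|[yR yQ]].
  by rewrite rQ // imset_f // QP'.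
by exists y => //; rewrite retraction_fix.
Qed.

Lemma retraction_comp_section (g : T -> T) :
  {in R, forall y, g y \in P} -> {in R &, forall x y, x <= y -> g x <= g y} ->
  {in R, forall y, r (g y) = y} ->
  [/\ retraction_on P (g \o r), (g \o r) @: P = g @: R,
      {in R &, forall x y, (g x <= g y) = (x <= y)} & iso_sub (g @: R) R].
Proof.
move=> gP ghomo rg.
have gle : {in R &, forall x y, (g x <= g y) = (x <= y)}.
  move=> x y xR yR; apply/idP/idP; last exact: ghomo.
  by move=> /(retraction_homo (gP x xR) (gP y yR)); rewrite !rg.
split=> //; first split.
- by move=> x xP; apply: gP; exact: imset_f.
- by move=> x y xP yP xy; apply: ghomo; rewrite ?imset_f ?retraction_homo.
- by move=> x xP /=; rewrite rg // imset_f.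
- exact: imset_comp.
exists r; split.
- by move=> _ _ /imsetP[x xR ->] /imsetP[y yR ->]; rewrite !rg // => ->.
- by rewrite -imset_comp (eq_in_imset (fun y yR => rg y yR)) imset_id.
- by move=> _ _ /imsetP[x xR ->] /imsetP[y yR ->]; rewrite !rg // gle.
Qed.

Lemma retraction_redirect c v :
  c \in minimals P -> c \notin R -> v \in R -> v <= r c ->
  let s := fun x => if x == c then v else r x in
  retraction_on P s /\ s @: P = R.
Proof.
move=> cmin cR vR vc s; have cP := subsetP (minimals_sub P) c cmin.
have neqc y : y \in R -> (y == c) = false.
  by move=> yR; apply/negP => /eqP yc; rewrite -yc yR in cR.
have sR y : y \in R -> s y = y by move=> yR; rewrite /s neqc // retraction_fix.
have sP x : x \in P -> s x \in R.
  by move=> xP; rewrite /s; case: eqP => _; [exact: vR | exact: imset_f].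
split; first split.
- by move=> x /sP /retraction_image_sub.
- move=> x y xP yP xy; rewrite /s.
  case: (eqVneq x c) => [xc|nxc]; case: (eqVneq y c) => [yc|_] //.
  + by rewrite xc in xy; exact: le_trans vc (retraction_homo cP yP xy).
  + by rewrite yc in xy; rewrite (minimals_le_eq cmin xP xy) eqxx in nxc.
  + exact: retraction_homo.
- by move=> x /sP; exact: sR.
apply/setP => y; apply/imsetP/idP => [[x /sP ? ->] //|yR].
by exists y; [exact: retraction_image_sub | rewrite sR].
Qed.

End Retractions.

Section LowerSegment.
Context {d : Order.disp_t} {T : finPOrderType d}.

Lemma level_lower_segment k :
  level lower_segment k = lower_segment :&: level [set: T] k.
Proof.
apply: level_downset; first exact: subsetT.
move=> x y /mem_segment[i [_ ih xi]] _ yx.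
have [j _ yj] := level_cover (in_setT y).
apply/mem_segment; exists j; split=> //.
exact: leq_trans (ltnW (level_ltn xi yj yx)) ih.
Qed.

Lemma level_lower_segment_low k :
  (k <= (height [set: T]).-1)%N -> level lower_segment k = level [set: T] k.
Proof.
move=> kh; rewrite level_lower_segment; apply/setIidPr/subsetP => x xk.
by apply/mem_segment; exists k.
Qed.

End LowerSegment.

Section WidthThree.
Context {d : Order.disp_t} {T : finPOrderType d}.
Variables (h : nat) (c : 'I_h.+1 -> 'I_3 -> T).
Hypotheses (c_surj : forall t, exists k j, c k j = t)
  (c_inj : forall k j k' j', c k j = c k' j' -> k = k' /\ j = j')
  (c_chain : forall (k l : 'I_h.+1) j, (k < l)%N -> c k j < c l j)
  (c_row : forall k i j, i != j -> ~~ (c k i >=< c k j)).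

Lemma row_nlt k i j : ~~ (c k i < c k j).
Proof.
case: (eqVneq i j) => [->|ij]; first by rewrite ltxx.
by apply: contra (c_row k ij); exact: lt_comparable.
Qed.

Lemma c_lt_index k i l j : c k i < c l j -> (k < l)%N.
Proof.
move=> lt; case: (ltngtP k l) => // [lk|/val_inj kl].
  by have := row_nlt l i j; rewrite (lt_trans (c_chain i lk) lt).
by move: lt; rewrite kl (negbTE (row_nlt l i j)).
Qed.

Lemma rest_whole k x :
  x \in rest [set: T] k <-> exists (k' : 'I_h.+1) (j : 'I_3), (k <= k')%N /\ x = c k' j.
Proof.
elim: k x => [|k IH] x.
  by split=> [_|]; [have [k' [j <-]] := c_surj x; exists k', j | rewrite inE].
rewrite /= in_setD; split.
  case/andP => xnmin /IH[k' [j [kk' ex]]]; subst x; exists k', j; split=> //.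
  rewrite ltn_neqAle kk' andbT; apply: contra xnmin => /eqP ek.
  apply/minimalsP; split; first by apply/IH; exists k', j.
  by move=> y /IH[k'' [i [kk'' ->]]]; apply/negP => /c_lt_index; rewrite -ek ltnNge kk''.
case=> k' [j [kk' ->]]; rewrite (IH _).2; last by exists k', j; rewrite ltnW.
rewrite andbT; apply/negP => /minimalsP[_ cmin].
have kh : (k < h.+1)%N by exact: ltn_trans kk' (ltn_ord k').
have : c (Ordinal kh) j \in rest [set: T] k by apply/IH; exists (Ordinal kh), j.
by move/cmin; rewrite c_chain.
Qed.

Lemma level_whole k x :
  x \in level [set: T] k <->
  exists (k' : 'I_h.+1) (j : 'I_3), (k' : nat) = k /\ x = c k' j.
Proof.
split=> [/minimalsP[/rest_whole[k' [j [kk' ->]]] cmin]|[k' [j [kk' ->]]]].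
  exists k', j; split=> //; apply/eqP; rewrite eqn_leq kk' andbT leqNgt.
  apply/negP => lt; have kh : (k < h.+1)%N by exact: ltn_trans lt (ltn_ord k').
  have : c (Ordinal kh) j \in rest [set: T] k by apply/rest_whole; exists (Ordinal kh), j.
  by move/cmin; rewrite c_chain.
apply/minimalsP; split; first by apply/rest_whole; exists k', j; rewrite kk'.
move=> y /rest_whole[k'' [i [kk'' ->]]].
by apply/negP => /c_lt_index; rewrite kk' ltnNge kk''.
Qed.

Lemma level0_whole : level [set: T] 0 = [set c ord0 j | j : 'I_3].
Proof.
apply/setP => x; apply/idP/imsetP => [/level_whole[k' [j [k0 ->]]]|[j _ ->]].
  by exists j => //; congr c; exact: val_inj.
by apply/level_whole; exists ord0, j.
Qed.

Lemma card_level0_whole : #|level [set: T] 0| = 3%N.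
Proof.
rewrite level0_whole card_in_imset ?cardsT ?card_ord //.
by move=> i j _ _ /c_inj[].
Qed.

Hypothesis c_nice : nice_whole (T := T).

Lemma nice_below_level1 (k1 : 'I_h.+1) j : (k1 : nat) = 1%N ->
  exists2 i, i != j & c ord0 i < c k1 j.
Proof.
move=> k11; have c01 : c ord0 j < c k1 j by apply: c_chain; rewrite k11.
have [_ [z [zlt zn]]] := c_nice c01; have [k [i ciz]] := c_surj z.
have k0 : k = ord0.
  have := @c_lt_index k i k1 j; rewrite ciz k11 ltnS leqn0 => /(_ zlt) /eqP k0.
  exact: val_inj.
exists i; last by rewrite -k0 ciz.
by apply: contraNneq zn => ij; rewrite -ciz k0 ij.
Qed.

Lemma c0_neq i j : i != j -> c ord0 i != c ord0 j.
Proof. by move=> ij; apply: contraNneq ij => /c_inj[_ ->]. Qed.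

Lemma level1_two_below x : x \in level [set: T] 1 -> exists m1 m2,
  [/\ m1 \in level [set: T] 0, m2 \in level [set: T] 0, m1 != m2, m1 < x & m2 < x].
Proof.
move=> /level_whole[k1 [j [k11 ->]]]; have [i ij ci] := nice_below_level1 j k11.
exists (c ord0 j), (c ord0 i); rewrite level0_whole !imset_f // c0_neq 1?eq_sym //.
by split=> //; apply: c_chain; rewrite k11.
Qed.

Lemma ord3_meet (i j i' j' : 'I_3) :
  i != j -> i' != j' -> j != j' -> [|| i == j', i' == j | i == i'].
Proof.
by case: i j i' j' => [[|[|[|?]]] ?] [[|[|[|?]]] ?] [[|[|[|?]]] ?] [[|[|[|?]]] ?].
Qed.

Lemma level1_common_below x y : x \in level [set: T] 1 -> y \in level [set: T] 1 ->
  x != y -> exists2 m, m \in level [set: T] 0 & (m < x) && (m < y).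
Proof.
move=> /level_whole[k1 [j [k11 ->]]] /level_whole[k1' [j' [k11' ->]]].
have -> : k1' = k1 by apply: val_inj; rewrite /= k11 k11'.
move=> neq; have jj' : j != j' by apply: contraNneq neq => ->.
have [i ij ci] := nice_below_level1 j k11; have [i' ij' ci'] := nice_below_level1 j' k11.
have cc j0 : c ord0 j0 < c k1 j0 by apply: c_chain; rewrite k11.
have c0 j0 : c ord0 j0 \in level [set: T] 0 by rewrite level0_whole imset_f.
case/or3P: (ord3_meet ij ij' jj') => /eqP e.
- by exists (c ord0 i); rewrite ?c0 // ci e cc.
- by exists (c ord0 i'); rewrite ?c0 // ci' e cc.
- by exists (c ord0 i); rewrite ?c0 // ci e ci'.
Qed.

End WidthThree.

Section Shape.
Context {d : Order.disp_t} {T : finPOrderType d}.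

(* The only features of a lower segment P of a member of N_2 that the argument
   uses: three minimal points, every other point lies above two of them (from
   niceness), P(0) u P(1) is a 6-crown, and horizon 2 puts P(0) below P(2 -> h). *)
Record N2_shape (P : {set T}) : Prop := N2Shape {
  card_level0 : #|level P 0| = 3;
  two_below : {in P, forall x, x \notin level P 0 -> exists m1 m2,
    [/\ m1 \in level P 0, m2 \in level P 0, m1 != m2, m1 < x & m2 < x]};
  common_below1 : {in level P 1 &, forall x y, x != y ->
    exists2 m, m \in level P 0 & (m < x) && (m < y)};
  level0_below_high : {in P, forall x, x \notin level P 0 -> x \notin level P 1 ->
    {in level P 0, forall m, m < x}} }.

Lemma lower_segment_shape : in_N2 (T := T) -> N2_shape lower_segment.
Proof.
case=> h [c [[[_ hT surj inj] [chain row _ _]] h2 nice hor]].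
have L0 : level lower_segment 0 = level [set: T] 0 by rewrite level_lower_segment_low.
have L1 : level lower_segment 1 = level [set: T] 1.
  by rewrite level_lower_segment_low // hT ltn_predRL.
have high x : x \in lower_segment -> x \notin level lower_segment 0 ->
    x \notin level lower_segment 1 -> {in level [set: T] 0, forall m, m < x}.
  move=> xP x0 x1 m m0; have [[|[|k]] _ xk] := level_cover (in_setT x).
  - by rewrite level_lower_segment inE xP xk in x0.
  - by rewrite level_lower_segment inE xP xk in x1.
  - exact: (hor 0 k.+2 isT m x m0 xk).
split; rewrite ?L0 ?L1.
- exact: card_level0_whole surj inj chain row.
- move=> x xP x0; case: (boolP (x \in level [set: T] 1)) => x1.
    exact: (level1_two_below surj inj chain row nice x1).
  have c0 j : c ord0 j \in level [set: T] 0.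
    by rewrite (level0_whole surj chain row) imset_f.
  exists (c ord0 ord0), (c ord0 ord_max).
  by split; rewrite ?c0 ?(c0_neq inj) ?(high x) ?L0 ?L1.
- exact: (level1_common_below surj chain row nice).
- by move=> x xP x0 x1; apply: high; rewrite ?L0 ?L1.
Qed.

End Shape.

Section TwoMinimalRetract.
Context {d : Order.disp_t} {T : finPOrderType d}.
Variables (P : {set T}) (r : T -> T).
Hypotheses (shapeP : N2_shape P) (retr : retraction_on P r).
Local Notation R := (r @: P).
Local Notation P0 := (level P 0).
Local Notation P1 := (level P 1).

Lemma level0_retract_common_lower a b m : a \in level R 0 -> b \in level R 0 ->
  m \in P -> m <= a -> m <= b -> a = b.
Proof.
move=> a0 b0 mP ma mb; rewrite -(retraction_below_minimal retr mP a0 ma).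
exact: (retraction_below_minimal retr mP b0 mb).
Qed.

Lemma level0_retract_low a b : a \in level R 0 -> b \in level R 0 -> a != b ->
  (a \in P0) || (a \in P1).
Proof.
move=> a0 b0; apply: contraR => /norP[na0 na1]; apply/eqP.
have aP := retraction_image_sub retr (in_level a0).
have [m m0 mb] : exists2 m, m \in P0 & m <= b.
  exact: minimals_below (retraction_image_sub retr (in_level b0)).
have ma := level0_below_high shapeP aP na0 na1 m0.
exact: level0_retract_common_lower a0 b0 (in_level m0) (ltW ma) mb.
Qed.

Lemma level0_retract_level1 a b : a \in level R 0 -> b \in level R 0 ->
  a \in P1 -> b \in P1 -> a = b.
Proof.
move=> a0 b0 a1 b1; case: (eqVneq a b) => // ab.
have [m m0 /andP[ma mb]] := common_below1 shapeP a1 b1 ab.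
exact: level0_retract_common_lower a0 b0 (in_level m0) (ltW ma) (ltW mb).
Qed.

Lemma level0_retract_sub0 y : y \in R -> y \in P0 -> y \in level R 0.
Proof.
move=> yR; apply: minimals_subset yR; apply/subsetP => z; exact: retraction_image_sub.
Qed.

(* A point x outside P(0) lies above two distinct points of P(0), and s
   would have to send both of them to p. *)
Lemma singleton_fiber s p : retraction_on P s -> p \in level (s @: P) 0 ->
  {in P0, forall m, s m = p -> m = p} -> [set x in P | s x == p] = [set p].
Proof.
move=> sretr p0 fib0; have pS := in_level p0.
apply/setP => x; rewrite !inE; apply/andP/eqP => [[xP /eqP sx]|->]; last first.
  by rewrite (retraction_image_sub sretr pS) (retraction_fix sretr pS).
case: (boolP (x \in P0)) => [x0|nx0]; first exact: fib0.
have [m1 [m2 [m10 m20 m12 m1x m2x]]] := two_below shapeP xP nx0.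
have below_p m : m \in P0 -> m < x -> m = p.
  move=> m0 mx; apply: fib0 => //; apply: minimals_le_eq p0 (imset_f _ (in_level m0)) _.
  by rewrite -sx (retraction_homo sretr (in_level m0) xP (ltW mx)).
by move: m12; rewrite (below_p m1 m10 m1x) (below_p m2 m20 m2x) eqxx.
Qed.

Section Level1Minimal.
Variables a b : T.
Hypotheses (hab : level R 0 = [set a; b]) (a0 : a \in P0) (b1 : b \in P1).

Let aR0 : a \in level R 0. Proof. by rewrite hab set21. Qed.
Let bR0 : b \in level R 0. Proof. by rewrite hab set22. Qed.
Let bP : b \in P. Proof. exact: in_level b1. Qed.

Lemma level0_level1_neq x : x \in P0 -> x != b.
Proof. by move=> x0; apply: contraTneq b1 => <-; apply/negP => /(level_uniq x0). Qed.

Let b_notin0 : b \notin P0.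
Proof. by apply/negP => /level0_level1_neq; rewrite eqxx. Qed.

Lemma retract_below_level1 m : m \in P0 -> m < b -> r m = b.
Proof.
by move=> m0 mb; exact: (retraction_below_minimal retr (in_level m0) bR0 (ltW mb)).
Qed.

Lemma retract_level1 y : y \in R -> y \in P1 -> y = b.
Proof.
move=> yR y1; case: (eqVneq y b) => // yb.
have [m m0 /andP[my mb]] := common_below1 shapeP y1 b1 yb.
have := retraction_homo retr (in_level m0) (retraction_image_sub retr yR) (ltW my).
rewrite retract_below_level1 // (retraction_fix retr yR) le_eqVlt eq_sym (negbTE yb) /=.
by move/(level_ltn y1 b1); rewrite ltnn.
Qed.

Lemma retract_level0 y : y \in R -> y \in P0 -> y = a.
Proof.
move=> yR y0; have := level0_retract_sub0 yR y0; rewrite hab !inE => /orP[] /eqP // yb.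
by move: (level0_level1_neq y0); rewrite yb eqxx.
Qed.

Lemma retract_high x : x \in P -> x \notin P0 -> x \notin P1 ->
  (r x != a) && (r x != b).
Proof.
move=> xP x0 x1; have [m [_ [m0 _ _ mb _]]] := two_below shapeP bP b_notin0.
have high := level0_below_high shapeP xP x0 x1.
have ab := level0_level1_neq a0.
have brx : b <= r x.
  rewrite -(retract_below_level1 m0 mb).
  exact: (retraction_homo retr (in_level m0) xP (ltW (high m m0))).
have arx : a <= r x.
  rewrite -(retraction_fix retr (in_level aR0)).
  exact: (retraction_homo retr (in_level a0) xP (ltW (high a a0))).
apply/andP; split; apply: contraNneq ab => rxe; rewrite rxe in arx brx.
  by apply/eqP/esym; exact: (minimals_le_eq aR0 (in_level bR0) brx).
by apply/eqP; exact: (minimals_le_eq bR0 (in_level aR0) arx).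
Qed.

Lemma retract_upper_segments : (2 <= height P)%N ->
  (1 <= height R)%N /\ is_retract (segment P 2 (height P)) (segment R 1 (height R)).
Proof.
move=> hP; rewrite segment2_height segment1_height hab.
set Q := P :\: (P0 :|: P1).
have high_R y : y \in R -> (y \in Q) = (y \notin [set a; b]).
  move=> yR; rewrite in_setD in_setU in_set2 (retraction_image_sub retr yR) andbT.
  rewrite !negb_or.
  apply/andP/andP => [[y0 y1]|[ya yb]]; split.
  - by apply: contraNneq y0 => ->.
  - by apply: contraNneq y1 => ->.
  - by apply: contraNN ya => /(retract_level0 yR)/eqP.
  - by apply: contraNN yb => /(retract_level1 yR)/eqP.
have rQ : {in Q, forall x, r x \in Q}.
  move=> x xQ; move: (xQ); rewrite in_setD in_setU negb_or => /andP[/andP[x0 x1] xP].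
  by rewrite high_R ?imset_f // in_set2 negb_or retract_high.
have [x xh] := level_height (ltnW hP).
have xQ : x \in Q.
  rewrite in_setD in_setU (in_level xh) andbT negb_or.
  by apply/andP; split; apply/negP => /(level_uniq xh) e; rewrite e in hP.
have [retrQ imQ] := retraction_restrict retr (subsetDl _ _) rQ.
have rxR : r x \in R := imset_f _ (in_level xh).
split; first by apply: (height_gt0 rxR); rewrite hab -high_R // rQ.
exists r; split=> //; rewrite imQ; apply/setP => y; rewrite in_setI in_setD.
by case yR: (y \in R); rewrite ?andbT ?andbF // high_R.
Qed.

Lemma below_level1_neq m : m \in P0 -> m < b -> m != a.
Proof.
move=> m0 mb; apply: contraTneq (level0_level1_neq a0) => ma.
by rewrite negbK -(retract_below_level1 m0 mb) ma (retraction_fix retr (in_level aR0)).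
Qed.

(* Replace b by a point m1 of P(0) below it, which r sends back to b. *)
Lemma normalized_retract_level1 : normalized_retract P R.
Proof.
have [m1 [m2 [m10 m20 m12 m1b m2b]]] := two_below shapeP bP b_notin0.
have m1a := below_level1_neq m10 m1b.
pose g y := if y == b then m1 else y.
have gP : {in R, forall y, g y \in P}.
  move=> y yR; rewrite /g; case: eqP => _; first exact: (in_level m10).
  exact: (retraction_image_sub retr yR).
have ghomo : {in R &, forall x y, x <= y -> g x <= g y}.
  move=> x y xR yR xy; rewrite /g.
  case: (eqVneq x b) => [xb|xb]; case: (eqVneq y b) => [yb|yb] //.
  - by rewrite xb in xy; exact: ltW (lt_le_trans m1b xy).
  - by rewrite yb in xy; rewrite (minimals_le_eq bR0 xR xy) eqxx in xb.
have rg : {in R, forall y, r (g y) = y}.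
  move=> y yR; rewrite /g; case: (eqVneq y b) => [->|_].
    exact: retract_below_level1.
  exact: (retraction_fix retr yR).
have [sretr sP gle iso] := retraction_comp_section retr gP ghomo rg.
have ga : g a = a by rewrite /g (negbTE (level0_level1_neq a0)).
have s_a : (g \o r) a = a by rewrite /= (retraction_fix retr (in_level aR0)) ga.
have s_below m : m \in P0 -> m < b -> (g \o r) m = m1.
  by move=> m0 mb; rewrite /= retract_below_level1 // /g eqxx.
have S0 : level ((g \o r) @: P) 0 = [set a; m1].
  rewrite sP /level /= minimals_imset //; change (minimals R) with (level R 0).
  by rewrite hab imsetU !imset_set1 ga /g eqxx.
have P0E : P0 = [set a; m1; m2].
  apply: (set3_card (card_level0 shapeP) a0 m10 m20 _ _ m12); rewrite eq_sym //.
  exact: below_level1_neq m20 m2b.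
exists (g \o r); split=> //.
- by rewrite sP.
- by rewrite S0; apply/subsetP => y /set2P[] ->.
- by rewrite S0 P0E !imsetU !imset_set1 s_a !s_below // -setUA setUid.
- have aS0 : a \in level ((g \o r) @: P) 0 by rewrite S0 set21.
  exists a => //; apply: (singleton_fiber sretr aS0) => m.
  rewrite P0E !inE -orbA => /or3P[] /eqP-> //; rewrite s_below // => m1a'.
  by rewrite m1a' eqxx in m1a.
Qed.

End Level1Minimal.

Section Level0Minimal.
Variables a b c : T.
Hypotheses (hab : level R 0 = [set a; b]) (a0 : a \in P0) (b0 : b \in P0)
  (c0 : c \in P0) (ab : a != b) (c_ab : c \notin [set a; b]) (a_rc : a <= r c).

Lemma normalized_retract_level0 : normalized_retract P R.
Proof.
have aR0 : a \in level R 0 by rewrite hab set21.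
have bR0 : b \in level R 0 by rewrite hab set22.
have cR : c \notin R.
  by apply: contra c_ab => cR; rewrite -hab; exact: level0_retract_sub0 cR c0.
have [sretr sP] := retraction_redirect retr c0 cR (in_level aR0) a_rc.
set s := fun x => _ in sretr sP.
have s_fix y : y \in R -> s y = y.
  move=> yR; have yc : y != c by apply: contraNneq cR => <-.
  by rewrite /s (negbTE yc) (retraction_fix retr yR).
have sc : s c = a by rewrite /s eqxx.
have [ca cb] : c != a /\ c != b by move: c_ab; rewrite in_set2 negb_or => /andP.
have P0E : P0 = [set a; b; c].
  by apply: (set3_card (card_level0 shapeP) a0 b0 c0 ab); rewrite eq_sym.
exists s; rewrite sP; split=> //.
- exact: iso_sub_refl.
- by rewrite hab; apply/subsetP => y /set2P[] ->.
- rewrite hab P0E !imsetU !imset_set1 sc !s_fix ?(in_level aR0) ?(in_level bR0) //.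
  by rewrite -setUA (setUC [set b]) setUA setUid.
- exists b => //; apply: (singleton_fiber sretr); first by rewrite sP.
  move=> m; rewrite P0E !inE -orbA => /or3P[] /eqP-> //.
  + by rewrite s_fix ?(in_level aR0) // => /eqP; rewrite (negbTE ab).
  + by rewrite sc => /eqP; rewrite (negbTE ab).
Qed.

End Level0Minimal.

Section TwoMinimal.
Variables a b : T.
Hypotheses (hab : level R 0 = [set a; b]) (ab : a != b).

Let hba : level R 0 = [set b; a]. Proof. by rewrite hab setUC. Qed.
Let aR0 : a \in level R 0. Proof. by rewrite hab set21. Qed.
Let bR0 : b \in level R 0. Proof. by rewrite hab set22. Qed.

Lemma level0_retract_cases :
  [\/ a \in P0 /\ b \in P0, a \in P0 /\ b \in P1 | b \in P0 /\ a \in P1].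
Proof.
have ba : b != a by rewrite eq_sym.
have := level0_retract_low aR0 bR0 ab; have := level0_retract_low bR0 aR0 ba.
case/orP=> [b0|b1] /orP[a0|a1]; [exact: Or31 | exact: Or33 | exact: Or32 |].
by move: ab; rewrite (level0_retract_level1 aR0 bR0 a1 b1) eqxx.
Qed.

Lemma level0_retract_sub : level R 0 \subset P0 :|: P1.
Proof.
apply/subsetP => y; rewrite hab => /set2P[] ->; rewrite in_setU;
  by case: level0_retract_cases => -[ha hb]; rewrite ?ha ?hb ?orbT.
Qed.

Lemma level0_retract_meet0 : level R 0 :&: P0 != set0.
Proof.
apply/set0Pn; case: level0_retract_cases => -[x0 _];
  by [exists a; rewrite inE aR0 | exists a; rewrite inE aR0 | exists b; rewrite inE bR0].
Qed.

Lemma level0_retract_meet1 : (2 <= height P)%N -> level R 0 :&: P1 != set0 ->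
  (1 <= height R)%N /\ is_retract (segment P 2 (height P)) (segment R 1 (height R)).
Proof.
move=> hP; case: level0_retract_cases => -[x0 y1].
- move=> /set0Pn[z]; rewrite inE hab => /andP[/set2P[] -> z1].
    by have := level_uniq x0 z1.
  by have := level_uniq y1 z1.
- by move=> _; exact: (retract_upper_segments hab x0 y1 hP).
- by move=> _; exact: (retract_upper_segments hba x0 y1 hP).
Qed.

Lemma normalized_retract_two : normalized_retract P R.
Proof.
case: level0_retract_cases => -[x0 y0].
- have [c c0 c_ab] := card3_third (card_level0 shapeP) ab.
  have [v v0 vc] := minimals_below (imset_f r (in_level c0)).
  move: v0; rewrite -/(level R 0) hab => /set2P[] v_eq; rewrite v_eq in vc.
    exact: normalized_retract_level0 hab x0 y0 c0 ab c_ab vc.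
  rewrite setUC in c_ab; have ba : b != a by rewrite eq_sym.
  exact: normalized_retract_level0 hba y0 x0 c0 ba c_ab vc.
- exact: normalized_retract_level1 hab x0 y0.
- exact: normalized_retract_level1 hba x0 y0.
Qed.

End TwoMinimal.
End TwoMinimalRetract.

Theorem lemma4p4 (d : Order.disp_t) (T : finPOrderType d)
  (r : T -> T) :
  let P := @lower_segment d T in
  let R := r @: P in
  in_N2 (T := T) ->
  (2 <= height P)%N ->
  retraction_on P r ->
  #|level R 0| = 2 -> antichain (level R 0) ->
  [/\ level R 0 \subset level P 0 :|: level P 1,
      level R 0 :&: level P 0 != set0 &
      (level R 0 :&: level P 1 != set0 ->
         (1 <= height R)%N /\
         is_retract (segment P 2 (height P)) (segment R 1 (height R)))]
  /\
  (exists s : T -> T,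
     let S := s @: P in
     [/\ retraction_on P s, iso_sub S R,
         level S 0 \subset level P 0,
         s @: level P 0 = level S 0 &
         exists2 p, p \in level S 0 & [set x in P | s x == p] = [set p]]).
Proof.
(* The antichain hypothesis is automatic for minimal elements. *)
move=> P R inN2 hP retr /eqP/cards2P[a [b [ab hab]]] _.
have shapeP := lower_segment_shape inN2.
split; first split.
- exact: (level0_retract_sub shapeP retr hab ab).
- exact: (level0_retract_meet0 shapeP retr hab ab).
- exact: (level0_retract_meet1 shapeP retr hab ab hP).
exact: (normalized_retract_two shapeP retr hab ab).
Qed.
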